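(* Let $M$ be a partial multiplication matrix whose row-column graph is a cycle, and let $\pi^\#$ be a gridded $M$-coil with points $v_1,\dots,v_n$ (ordered as in the definition of a coil). Then for every $1<i<n$, the gridded permutation $\pi^\#-v_i$ obtained by removing $v_i$ is $M$-divisible; specifically $\pi^\#-v_i=\sigma^\#\boxplus\tau^\#$, where $\sigma^\#$ and $\tau^\#$ are the gridded subpermutations on the points $v_{i+1},\dots,v_n$ and on the points $v_1,\dots,v_{i-1}$ respectively.
   Context: A gridding matrix has entries in $\{0,1,-1\}$; an $m\times n$ one has $m$ columns, $n$ rows, $M_{ij}$ in column $i$ from the left and row $j$ from the bottom. An $M$-gridding of a permutation $\pi$ of length $L$ is a choice of vertical lines $\tfrac12=v_0\le\dots\le v_m=L+\tfrac12$ and horizontal lines $\tfrac12=h_0\le\dots\le h_n=L+\tfrac12$, not through points of $\pi$, such that in each cell $C_{ij}=\{v_{i-1}<x<v_i,\ h_{j-1}<y<h_j\}$ the points of $\pi$ are absent if $M_{ij}=0$, increasing if $M_{ij}=1$, decreasing if $M_{ij}=-1$; the result is an $M$-gridded permutation. The row-column graph $G_M$ is the bipartite graph on $\{1,\dots,m\}\cup\{1',\dots,n'\}$ with edge $ij'$ iff $M_{ij}\ne0$. $M$ is a partial multiplication matrix: there are fixed $c_1,\dots,c_m,r_1,\dots,r_n\in\{\pm1\}$ with $M_{ij}=c_ir_j$ for each non-zero entry. Column $i$ is oriented left-to-right if $c_i=1$, right-to-left otherwise; row $j$ bottom-to-top if $r_j=1$, top-to-bottom otherwise. The orientation digraph of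 an $M$-gridded permutation has its points as vertices with $x\to y$ whenever $x,y$ lie in a common column of cells and $x$ precedes $y$ in that column's orientation, or in a common row of cells and $x$ precedes $y$ in that row's orientation. $M$-sum: $\sigma^\#\boxplus\tau^\#$ is the $M$-gridded permutation whose points are those of $\sigma^\#$ and $\tau^\#$, each in its cell, with the relative order among points of $\sigma^\#$ and among points of $\tau^\#$ unchanged, and such that in every column (resp. row) of cells all points of $\sigma^\#$ precede all points of $\tau^\#$ in that column's (resp. row's) orientation. $M$-divisible means equal to $\sigma^\#\boxplus\tau^\#$ with both non-empty. Let $\ell$ be the length of the cycle $G_M$. A gridded $M$-coil is an $M$-gridded permutation of length $n>\ell$ with an ordering $v_1,\dots,v_n$ of its points and a labelling of the $\ell$ non-zero cells by $1,\dots,\ell$ such that (C1) $v_i$ lies in cell $i\bmod\ell$ (residues in $\{1,\dots,\ell\}$); (C2) $v_{i-1}\to v_i$ for $1<i\le n$; (C3) $v_i\to v_{i-\ell-1}$ for $\ell+1<i\le n$; (C4) $v_{\ell+1}\to v_1$. *)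

From HB Require Import structures.
From mathcomp Require Import all_boot all_order all_algebra all_fingroup.
Set Implicit Arguments. Unset Strict Implicit. Unset Printing Implicit Defensive.

(* Conventions (0-based indices throughout):
   - A gridding matrix M : 'M[int]_(m,n); M i j is the entry in COLUMN i
     (from the left, i : 'I_m) and ROW j (from the bottom, j : 'I_n).
   - A gridded point configuration: a finite set of points with x- and
     y-coordinates (natural numbers) and gridlines.  The vertical line number
     k (0 <= k <= m) is encoded by a natural number gv k, standing for the
     half-integer line at position gv k - 1/2: a point with x-coordinate x is
     in column i iff gv i <= x < gv (i+1).  Horizontal lines likewise. *)

Record gconf := GConf {
  gpt : finType;
  gX  : gpt -> nat;
  gY  : gpt -> nat;
  gv  : nat -> nat;
  gh  : nat -> nat
}.
Arguments gX : clear implicits.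
Arguments gY : clear implicits.
Arguments gv : clear implicits.
Arguments gh : clear implicits.

Definition in_col (G : gconf) (p : gpt G) (i : nat) : Prop :=
  gv G i <= gX G p < gv G i.+1.
Definition in_row (G : gconf) (p : gpt G) (j : nat) : Prop :=
  gh G j <= gY G p < gh G j.+1.
Definition in_cell (G : gconf) (p : gpt G) (i j : nat) : Prop :=
  in_col p i /\ in_row p j.

Definition is_gridding_matrix (m n : nat) (M : 'M[int]_(m, n)) : Prop :=
  forall i j, M i j = 0%R \/ M i j = 1%R \/ M i j = (-1)%R.

Definition is_Mgridded (m n : nat) (M : 'M[int]_(m, n)) (G : gconf) : Prop :=
  ((injective (gX G)) /\ (injective (gY G)) /\ ((forall i, i < m -> gv G i <= gv G i.+1)) /\ ((forall j, j < n -> gh G j <= gh G j.+1)) /\ ((forall p, gv G 0 <= gX G p < gv G m)) /\ ((forall p, gh G 0 <= gY G p < gh G n)) /\ ((forall (p : gpt G) (i : 'I_m) (j : 'I_n), in_cell p i j -> M i j <> 0%R)) /\ ((forall p q (i : 'I_m) (j : 'I_n), in_cell p i j -> in_cell q i j ->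
          M i j = 1%R -> gX G p < gX G q -> gY G p < gY G q)) /\ ((forall p q (i : 'I_m) (j : 'I_n), in_cell p i j -> in_cell q i j ->
          M i j = (-1)%R -> gX G p < gX G q -> gY G q < gY G p))).

(* The configuration of a permutation pi of length L (point p : 'I_L has
   x-coordinate p and y-coordinate pi p, i.e. the paper's coordinates minus 1)
   with gridlines a (vertical) and b (horizontal). *)
Definition perm_gconf (L : nat) (pi : {perm 'I_L}) (a b : nat -> nat) : gconf :=
  @GConf 'I_L (fun p => val p) (fun p => val (pi p)) a b.

(* (pi, a, b) is an M-gridded permutation: first/last lines at 1/2 and L+1/2 *)
Definition Mgridded_perm (m n : nat) (M : 'M[int]_(m, n)) (L : nat)
    (pi : {perm 'I_L}) (a b : nat -> nat) : Prop :=
  [/\ a 0 = 0, a m = L, b 0 = 0, b n = L & is_Mgridded M (perm_gconf pi a b)].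

Definition pmm_signs (m n : nat) (M : 'M[int]_(m, n))
    (c : 'I_m -> int) (r : 'I_n -> int) : Prop :=
  [/\ forall i, c i = 1%R \/ c i = (-1)%R,
      forall j, r j = 1%R \/ r j = (-1)%R
    & forall i j, M i j <> 0%R -> M i j = (c i * r j)%R].

Definition prec (s : int) (u w : nat) : Prop :=
  if s == 1%R then u < w else w < u.

Definition arrow (m n : nat) (c : 'I_m -> int) (r : 'I_n -> int)
    (G : gconf) (p q : gpt G) : Prop :=
  (exists i : 'I_m, [/\ in_col p i, in_col q i & prec (c i) (gX G p) (gX G q)])
  \/ (exists j : 'I_n, [/\ in_row p j, in_row q j & prec (r j) (gY G p) (gY G q)]).

Definition rc_adj (m n : nat) (M : 'M[int]_(m, n)) : rel ('I_m + 'I_n) :=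
  fun u w => match u, w with
             | inl i, inr j => M i j != 0%R
             | inr j, inl i => M i j != 0%R
             | _, _ => false
             end.

Definition rc_is_cycle (m n : nat) (M : 'M[int]_(m, n)) : Prop :=
  [/\ 0 < m + n,
      forall u : 'I_m + 'I_n, #|[set w | rc_adj M u w]| = 2
    & forall u w : 'I_m + 'I_n, connect (rc_adj M) u w].

(* length of the cycle G_M = number of edges = number of non-zero cells *)
Definition cyc_len (m n : nat) (M : 'M[int]_(m, n)) : nat :=
  #|[set ij : 'I_m * 'I_n | M ij.1 ij.2 != 0%R]|.

(* Gridded M-coil: the permutation (pi,a,b), the ordering of points
   v_{k+1} = s k (k : 'I_L), and the labelling of the non-zero cells:
   label l+1 (0 <= l < ell) is the cell lab l. *)
Definition is_coil (m n : nat) (M : 'M[int]_(m, n)) (c : 'I_m -> int)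
    (r : 'I_n -> int) (L : nat) (pi : {perm 'I_L}) (a b : nat -> nat)
    (s : {perm 'I_L}) (lab : nat -> 'I_m * 'I_n) : Prop :=
  let G := perm_gconf pi a b in
  let ell := cyc_len M in
  ((Mgridded_perm M pi a b) /\ (ell < L) /\ (
      (forall l l', l < ell -> l' < ell -> lab l = lab l' -> l = l')) /\ ((forall l, l < ell -> M (lab l).1 (lab l).2 <> 0%R)) /\ (
      (forall k : 'I_L, @in_cell G (s k) (lab (k %% ell)).1 (lab (k %% ell)).2)) /\ (
      (forall k k' : 'I_L, val k' = (val k).+1 -> arrow c r (G := G) (s k) (s k'))) /\ (
      (forall k k' : 'I_L, ell < val k -> val k' = val k - ell - 1 ->
          arrow c r (G := G) (s k) (s k'))) /\ (
      (forall k k' : 'I_L, val k = ell -> val k' = 0 ->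
          arrow c r (G := G) (s k) (s k')))).

Definition restrict (G : gconf) (U : {set gpt G}) : gconf :=
  @GConf {p : gpt G | p \in U} (fun p => gX G (val p)) (fun p => gY G (val p))
         (gv G) (gh G).

Definition Msum (m n : nat) (c : 'I_m -> int) (r : 'I_n -> int)
    (P S T : gconf) : Prop :=
  exists f : gpt P -> (gpt S + gpt T)%type,
  ((bijective f) /\ (
      (forall p i j, in_cell p i j <->
         match f p with inl x => in_cell x i j | inr y => in_cell y i j end)) /\ (
      (forall p q x y, f p = inl x -> f q = inl y ->
         (gX P p < gX P q <-> gX S x < gX S y) /\
         (gY P p < gY P q <-> gY S x < gY S y))) /\ (
      (forall p q x y, f p = inr x -> f q = inr y ->
         (gX P p < gX P q <-> gX T x < gX T y) /\
         (gY P p < gY P q <-> gY T x < gY T y))) /\ (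
      (forall p q x y (i : 'I_m), f p = inl x -> f q = inr y ->
         in_col p i -> in_col q i -> prec (c i) (gX P p) (gX P q))) /\ (
      (forall p q x y (j : 'I_n), f p = inl x -> f q = inr y ->
         in_row p j -> in_row q j -> prec (r j) (gY P p) (gY P q)))).

Definition Mdivisible (m n : nat) (M : 'M[int]_(m, n)) (c : 'I_m -> int)
    (r : 'I_n -> int) (P : gconf) : Prop :=
  exists S T : gconf, [/\ is_Mgridded M S, is_Mgridded M T,
    0 < #|gpt S|, 0 < #|gpt T| & Msum c r P S T].

From HB Require Import structures.
From mathcomp Require Import all_boot all_order all_algebra all_fingroup.
From mathcomp Require Import zify.
Set Implicit Arguments. Unset Strict Implicit. Unset Printing Implicit Defensive.

(* Call a column or row of cells a line.  Because M is a partial multiplication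
   matrix, inside a single cell the orientation of its column and of its row
   induce the same order, so an arrow between two points always orients the
   line through their cells.  Since G_M is a cycle, each line meets exactly two
   non-zero cells, and the cells of the coil (labelled 1..ell, consecutive ones
   sharing a line by (C2)) are therefore traversed cyclically: two cells on a
   common line are equal or have cyclically consecutive labels.
   Now let v_t, v_t' lie on a common line with t' + 1 < t.  If they are in the
   same cell, the chain v_t -> v_(t-ell-1) -> v_(t-ell) given by (C3), (C2)
   (or (C4) when t = ell) steps back by ell inside the cell, and induction
   gives v_t before v_t'.  If the cell of v_t' follows that of v_t, go back in
   the cell of v_t to v_(t'-1) and use (C2) (through v_ell and (C4) if t' = 1);
   if the cell of v_t follows that of v_t', use (C3) to reach v_(t-ell-1) in
   the cell of v_t' and go back there.  Hence all of v_(k+1..n) precede all of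
   v_(1..k-1) in every line, which is the claimed M-sum decomposition. *)

Lemma prec_trans (sg : int) u v w : prec sg u v -> prec sg v w -> prec sg u w.
Proof. by rewrite /prec; case: (sg == 1%R); lia. Qed.

Lemma nondecreasing_interval_uniq (f : nat -> nat) N :
    (forall i, i < N -> f i <= f i.+1) ->
  forall i i' x, i < N -> i' < N ->
  f i <= x < f i.+1 -> f i' <= x < f i'.+1 -> i = i'.
Proof.
move=> f_ndecr.
have mono : {in [pred i | i <= N] &, {homo f : i j / i <= j}}.
  apply: homo_leq_in leq_trans _ _ => [//|i j + + k|i _]; rewrite !inE; [lia | exact: f_ndecr].
suff lt_gap i i' x : i < i' -> i' < N ->
    f i <= x < f i.+1 -> f i' <= x < f i'.+1 -> False.
  move=> i i' x iN i'N hi hi'; case: (ltngtP i i') => [lt|lt|//]; exfalso.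
    exact: (lt_gap i i' x).
  exact: (lt_gap i' i x).
move=> lt i'N hi hi'.
have := mono i.+1 i'; rewrite !inE; lia.
Qed.

Lemma modn_eq_gap d u w : 0 < d -> w < u -> u = w %[mod d] -> w + d <= u.
Proof.
move=> d_gt0 w_lt_u eq_uw.
have : d %| u - w by rewrite -eqn_mod_dvd ?(ltnW w_lt_u) // eq_uw.
by move/dvdn_leq; rewrite subn_gt0 => /(_ w_lt_u); lia.
Qed.

Section Lines.
Variables (m n : nat) (c : 'I_m -> int) (r : 'I_n -> int) (G : gconf).

Definition on_line (l : 'I_m + 'I_n) (p : gpt G) : Prop :=
  match l with inl i => in_col p i | inr j => in_row p j end.

Definition line_prec (l : 'I_m + 'I_n) (p q : gpt G) : Prop :=
  match l with
  | inl i => prec (c i) (gX G p) (gX G q)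
  | inr j => prec (r j) (gY G p) (gY G q)
  end.

Lemma arrowE p q :
  arrow c r p q <-> exists l, [/\ on_line l p, on_line l q & line_prec l p q].
Proof.
split=> [[[i hi]|[j hj]]|[[i|j] hl]];
  by [exists (inl i) | exists (inr j) | left; exists i | right; exists j].
Qed.

Lemma line_prec_trans l p q w : line_prec l p q -> line_prec l q w -> line_prec l p w.
Proof. by case: l => i; apply: prec_trans. Qed.

Definition cell_on (l : 'I_m + 'I_n) (x : 'I_m * 'I_n) : bool :=
  (l == inl x.1) || (l == inr x.2).

Lemma cell_on_inl i x : cell_on (inl i) x = (i == x.1).
Proof. by rewrite /cell_on orbF. Qed.

Lemma cell_on_inr j x : cell_on (inr j) x = (j == x.2).
Proof. by []. Qed.

Lemma cell_on_common x y l l' : x != y ->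
  cell_on l x -> cell_on l y -> cell_on l' x -> cell_on l' y -> l = l'.
Proof.
case: x y => [i j] [i' j'] /eqP ne; rewrite /cell_on /=.
by move=> /orP[]/eqP-> /orP[]/eqP ? /orP[]/eqP-> /orP[]/eqP ?; congruence.
Qed.

Lemma cell_on_third x l l1 l2 : l1 != l2 ->
  cell_on l1 x -> cell_on l2 x -> cell_on l x -> (l == l1) || (l == l2).
Proof.
rewrite /cell_on => ne /orP[]/eqP e1 /orP[]/eqP e2 /orP[]/eqP e; subst l l1 l2;
  by rewrite ?eqxx ?orbT in ne *.
Qed.

End Lines.

Section GriddedCells.
Variables (m n : nat) (M : 'M[int]_(m, n)) (c : 'I_m -> int) (r : 'I_n -> int).
Variable G : gconf.
Hypothesis M_gridding : is_gridding_matrix M.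
Hypothesis M_signs : pmm_signs M c r.
Hypothesis G_gridded : is_Mgridded M G.

Lemma in_col_inj (p : gpt G) (i i' : 'I_m) : in_col p i -> in_col p i' -> i = i'.
Proof.
case: G_gridded => _ [_ [gv_ndecr _]] hi hi'; apply: val_inj.
exact: nondecreasing_interval_uniq gv_ndecr _ _ _ (ltn_ord i) (ltn_ord i') hi hi'.
Qed.

Lemma in_row_inj (p : gpt G) (j j' : 'I_n) : in_row p j -> in_row p j' -> j = j'.
Proof.
case: G_gridded => _ [_ [_ [gh_ndecr _]]] hj hj'; apply: val_inj.
exact: nondecreasing_interval_uniq gh_ndecr _ _ _ (ltn_ord j) (ltn_ord j') hj hj'.
Qed.

Lemma on_line_cell (p : gpt G) (x : 'I_m * 'I_n) l :
  in_cell p x.1 x.2 -> on_line l p <-> cell_on l x.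
Proof.
case=> hc hr; case: l => [i|j]; rewrite ?cell_on_inl ?cell_on_inr /=.
  by split=> [/in_col_inj/(_ hc) ->|/eqP ->].
by split=> [/in_row_inj/(_ hr) ->|/eqP ->].
Qed.

Lemma in_cell_ltY (p q : gpt G) (i : 'I_m) (j : 'I_n) : in_cell p i j -> in_cell q i j ->
  (gY G p < gY G q) = (if M i j == 1%R then gX G p < gX G q else gX G q < gX G p).
Proof.
case: G_gridded => injX [_ [_ [_ [_ [_ [nz [incr decr]]]]]]] hp hq.
have [M1|M_1] : M i j = 1%R \/ M i j = (-1)%R by case: (M_gridding i j) (nz p i j hp).
- rewrite M1 eqxx; case: (ltngtP (gX G p) (gX G q)) => [lt|gt|/injX ->].
  + exact/idP/(incr p q i j).
  + by have := incr q p i j hq hp M1 gt; lia.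
  + by rewrite ltnn.
- rewrite M_1 /=; case: (ltngtP (gX G q) (gX G p)) => [lt|gt|/injX ->].
  + by have := decr q p i j hq hp M_1 lt; lia.
  + by have := decr p q i j hp hq M_1 gt; lia.
  + by rewrite ltnn.
Qed.

Lemma in_cell_line_prec (p q : gpt G) (i : 'I_m) (j : 'I_n) :
  in_cell p i j -> in_cell q i j ->
  line_prec c r (inl i) p q <-> line_prec c r (inr j) p q.
Proof.
case: M_signs => c_sign r_sign M_cr hp hq.
have /M_cr Mij : M i j <> 0%R.
  by case: G_gridded => _ [_ [_ [_ [_ [_ [nz _]]]]]]; apply: nz hp.
rewrite /= /prec (in_cell_ltY hp hq) (in_cell_ltY hq hp) Mij.
by case: (c_sign i) (r_sign j) => -> [] ->.
Qed.

Lemma line_prec_in_cell (p q : gpt G) (x : 'I_m * 'I_n) l l' :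
  in_cell p x.1 x.2 -> in_cell q x.1 x.2 ->
  cell_on l x -> cell_on l' x -> line_prec c r l p q -> line_prec c r l' p q.
Proof.
move=> hp hq; have := in_cell_line_prec hp hq.
by rewrite /cell_on => e /orP[]/eqP-> /orP[]/eqP-> // /e.
Qed.

Lemma arrow_line_prec (p q : gpt G) (x y : 'I_m * 'I_n) l :
  in_cell p x.1 x.2 -> in_cell q y.1 y.2 ->
  arrow c r p q -> cell_on l x -> cell_on l y -> line_prec c r l p q.
Proof.
move=> hp hq /arrowE[l' [/(on_line_cell _ hp) lx /(on_line_cell _ hq) ly prec_l']].
move=> hlx hly.
have [exy|nexy] := eqVneq x y.
  by subst y; apply: line_prec_in_cell hp hq lx hlx prec_l'.
by rewrite (cell_on_common nexy hlx hly lx ly).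
Qed.

End GriddedCells.

Lemma restrict_Mgridded m n (M : 'M[int]_(m, n)) (G : gconf) (A : {set gpt G}) :
  is_Mgridded M G -> is_Mgridded M (restrict A).
Proof.
case=> injX [injY [hv [hh [hX [hY [nz [incr decr]]]]]]].
split; first by move=> p q /injX/val_inj.
split; first by move=> p q /injY/val_inj.
do 2 (split=> //); split; first by move=> p; apply: hX.
split; first by move=> p; apply: hY.
split; first by move=> p; apply: nz.
by split=> [p q|p q]; [apply: incr | apply: decr].
Qed.

Lemma restrict_Msum m n (c : 'I_m -> int) (r : 'I_n -> int) (G : gconf)
    (U S T : {set gpt G}) :
  S != set0 -> T != set0 -> [disjoint S & T] -> U = S :|: T ->
  (forall p q l, p \in S -> q \in T -> on_line l p -> on_line l q -> line_prec c r l p q) ->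
  Msum c r (restrict U) (restrict S) (restrict T).
Proof.
case/set0Pn=> x0 Sx0 /set0Pn[y0 Ty0] dST defU S_before_T.
have memU p : (p \in U) = (p \in S) || (p \in T) by rewrite defU inE.
have SU p : p \in S -> p \in U by rewrite memU => ->.
have TU p : p \in T -> p \in U by rewrite memU => ->; rewrite orbT.
have TnS p : p \in T -> p \notin S by move=> pT; rewrite (disjointFl dST pT).
pose s0 : gpt (restrict S) := exist _ x0 Sx0.
pose t0 : gpt (restrict T) := exist _ y0 Ty0.
pose u0 : gpt (restrict U) := exist _ x0 (SU x0 Sx0).
pose f (p : gpt (restrict U)) : gpt (restrict S) + gpt (restrict T) :=
  if val p \in S then inl (insubd s0 (val p)) else inr (insubd t0 (val p)).
pose g (w : gpt (restrict S) + gpt (restrict T)) : gpt (restrict U) :=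
  match w with inl x => insubd u0 (val x) | inr y => insubd u0 (val y) end.
have fP p : match f p with
            | inl x => val x = val p /\ val p \in S
            | inr y => val y = val p /\ val p \in T end.
  rewrite /f; case: ifP => [pS | /negbT pnS]; first by rewrite val_insubd pS.
  have pT : val p \in T by move: (valP p); rewrite memU (negbTE pnS).
  by rewrite val_insubd pT.
exists f; split.
  exists g.
    move=> p; apply: val_inj.
    case: (f p) (fP p) => [x|y] [<- _] /=; rewrite val_insubd.
      by rewrite (SU _ (valP x)).
    by rewrite (TU _ (valP y)).
  case=> [x|y] /=; rewrite /f val_insubd.
    by rewrite (SU _ (valP x)) (valP x) valKd.
  by rewrite (TU _ (valP y)) (negbTE (TnS _ (valP y))) valKd.
split; first by move=> p i j; case: (f p) (fP p) => [x|y] [+ _];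
  rewrite /in_cell /in_col /in_row /= => ->.
split; first by move=> p q x y fp fq; move: (fP p) (fP q); rewrite fp fq /= => -[-> _] [-> _].
split; first by move=> p q x y fp fq; move: (fP p) (fP q); rewrite fp fq /= => -[-> _] [-> _].
split=> [p q x y i|p q x y j] fp fq; move: (fP p) (fP q); rewrite fp fq => -[_ pS] [_ qT].
- exact: (S_before_T _ _ (inl i) pS qT).
- exact: (S_before_T _ _ (inr j) pS qT).
Qed.

Lemma restrict_Mdivisible m n (M : 'M[int]_(m, n)) (c : 'I_m -> int) (r : 'I_n -> int)
    (G : gconf) (U S T : {set gpt G}) :
  is_Mgridded M G -> S != set0 -> T != set0 ->
  Msum c r (restrict U) (restrict S) (restrict T) -> Mdivisible M c r (restrict U).
Proof.
move=> G_gridded neS neT sum; exists (restrict S), (restrict T).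
split=> //; try exact: restrict_Mgridded.
  by case/set0Pn: neS => x xS; apply/card_gt0P; exists (exist _ x xS).
by case/set0Pn: neT => y yT; apply/card_gt0P; exists (exist _ y yT).
Qed.

Section RowColumnGraph.
Variables (m n : nat) (M : 'M[int]_(m, n)).
Hypothesis M_cycle : rc_is_cycle M.

Definition line_cells (l : 'I_m + 'I_n) : {set 'I_m * 'I_n} :=
  [set x | cell_on l x & M x.1 x.2 != 0%R].

Definition other_line (l : 'I_m + 'I_n) (x : 'I_m * 'I_n) : 'I_m + 'I_n :=
  if l is inl _ then inr x.2 else inl x.1.

Lemma card_line_cells l : #|line_cells l| = #|[set w | rc_adj M l w]|.
Proof.
rewrite -(card_in_imset (f := other_line l)); last first.
  move=> [i j] [i' j']; rewrite !inE.
  case: l => ?; rewrite ?cell_on_inl ?cell_on_inr /=;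
    by move=> /andP[/eqP-> _] /andP[/eqP-> _] [->].
apply: eq_card => w; rewrite inE; apply/imsetP/idP.
  case=> -[i j]; rewrite inE.
  by case: l => ?; rewrite ?cell_on_inl ?cell_on_inr /= => /andP[/eqP<- nz] ->.
case: l w => [i|j] [i'|j'] //= adj.
  by exists (i, j'); rewrite // inE cell_on_inl eqxx.
by exists (i', j); rewrite // inE cell_on_inr eqxx.
Qed.

Lemma card_line_cells2 l : #|line_cells l| = 2.
Proof. by case: M_cycle => _ deg2 _; rewrite card_line_cells deg2. Qed.

Lemma line_cells_two l x y z : x \in line_cells l -> y \in line_cells l ->
  z \in line_cells l -> x != y -> (z == x) || (z == y).
Proof.
move=> xl yl zl nexy; apply/negPn/negP; rewrite negb_or => /andP[nezx nezy].
suff : 2 < #|line_cells l| by rewrite card_line_cells2.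
by apply/card_gt2P; exists x, y, z; split; split=> //; rewrite eq_sym.
Qed.

Lemma cyc_len_gt2 : 2 < cyc_len M.
Proof.
case: M_cycle => mn_gt0 deg2 _.
have [l0 _] : exists l0 : 'I_m + 'I_n, true.
  case: (posnP m) => [m0|m_gt0]; last by exists (inl (Ordinal m_gt0)).
  have n_gt0 : 0 < n by rewrite m0 in mn_gt0.
  by exists (inr (Ordinal n_gt0)).
have /card_gt0P[l1] : 0 < #|[set w | rc_adj M l0 w]| by rewrite deg2.
rewrite inE => adj01.
have ne01 : l0 != l1 by apply: contraTneq adj01 => <-; case: l0.
have cap_le1 : #|line_cells l0 :&: line_cells l1| <= 1.
  apply/card_le1_eqP => x y; rewrite !inE => /andP[/andP[x0 _] /andP[x1 _]].
  move=> /andP[/andP[y0 _] /andP[y1 _]].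
  apply/eqP; apply: contraNT ne01 => nexy; apply/eqP.
  exact: cell_on_common nexy y0 x0 y1 x1.
have sub : line_cells l0 :|: line_cells l1 \subset [set x | M x.1 x.2 != 0%R].
  by apply/subsetP => x; rewrite !inE => /orP[]/andP[_ ->].
apply: leq_trans (subset_leq_card sub).
by rewrite cardsU !card_line_cells2; lia.
Qed.

End RowColumnGraph.

Section Coil.
Variables (m n : nat) (M : 'M[int]_(m, n)) (c : 'I_m -> int) (r : 'I_n -> int).
Variables (L : nat) (pi : {perm 'I_L}) (a b : nat -> nat) (s : {perm 'I_L}).
Variable lab : nat -> 'I_m * 'I_n.
Hypothesis M_gridding : is_gridding_matrix M.
Hypothesis M_signs : pmm_signs M c r.
Hypothesis M_cycle : rc_is_cycle M.
Hypothesis coil : is_coil M c r pi a b s lab.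

Local Notation G := (perm_gconf pi a b).
Local Notation ell := (cyc_len M).

Lemma coil_gridded : is_Mgridded M G.
Proof. by case: coil => -[]. Qed.

Lemma cyc_len_lt : ell < L.
Proof. by case: coil => _ []. Qed.

Lemma cyc_len_gt0 : 0 < ell.
Proof. by have := cyc_len_gt2 M_cycle; lia. Qed.

Definition coil_cell (t : nat) : 'I_m * 'I_n := lab (t %% ell).

Lemma coil_cell_nonzero t : M (coil_cell t).1 (coil_cell t).2 != 0%R.
Proof. by case: coil => _ [_ [_ [nz _]]]; apply/eqP/nz; rewrite ltn_mod cyc_len_gt0. Qed.

Lemma coil_cell_eq t t' : (coil_cell t == coil_cell t') = (t == t' %[mod ell]).
Proof.
case: coil => _ [_ [lab_inj _]]; rewrite /coil_cell; apply/eqP/eqP => [|->] //.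
by apply: lab_inj; rewrite ltn_mod cyc_len_gt0.
Qed.

Lemma coil_cellD t : coil_cell (t + ell) = coil_cell t.
Proof. by rewrite /coil_cell modnDr. Qed.

Lemma coil_cellS t t' : (coil_cell t.+1 == coil_cell t'.+1) = (coil_cell t == coil_cell t').
Proof. by rewrite !coil_cell_eq -(addn1 t) -(addn1 t') eqn_modDr. Qed.

Lemma coil_cell_len : coil_cell ell = coil_cell 0.
Proof. by rewrite /coil_cell modnn mod0n. Qed.

Lemma coil_cellB t : ell <= t -> coil_cell (t - ell) = coil_cell t.
Proof. by move=> ell_le_t; rewrite -{2}(subnK ell_le_t) coil_cellD. Qed.

Lemma coil_cell_mod t : coil_cell (t %% ell) = coil_cell t.
Proof. by rewrite /coil_cell modn_mod. Qed.

Lemma mem_line_cells_coil t l : (coil_cell t \in line_cells M l) = cell_on l (coil_cell t).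
Proof. by rewrite inE coil_cell_nonzero andbT. Qed.

Lemma coil_cellD_neq t d : 0 < d < ell -> coil_cell (t + d) != coil_cell t.
Proof.
move=> /andP[d_gt0 d_lt]; rewrite coil_cell_eq -{2}[t]addn0 eqn_modDl mod0n.
by rewrite modn_small // -lt0n.
Qed.

Section Points.
Variable dflt : 'I_L.

(* [coil_pt t] is the paper's v_(t+1); for t >= L it is a junk value. *)
Definition coil_pt (t : nat) : gpt G := s (insubd dflt t).

Lemma coil_ptE (q : 'I_L) : coil_pt q = s q.
Proof. by rewrite /coil_pt valKd. Qed.

Lemma coil_pt_cell t : t < L -> in_cell (coil_pt t) (coil_cell t).1 (coil_cell t).2.
Proof.
by case: coil => _ [_ [_ [_ [C1 _]]]] tL; have := C1 (insubd dflt t); rewrite val_insubd tL.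
Qed.

Lemma arrow_succ t : t.+1 < L -> arrow c r (coil_pt t) (coil_pt t.+1).
Proof.
by case: coil => _ [_ [_ [_ [_ [C2 _]]]]] tL; apply: C2; rewrite !val_insubd tL ltnW.
Qed.

Lemma arrow_back t : ell < t -> t < L -> arrow c r (coil_pt t) (coil_pt (t - ell.+1)).
Proof.
case: coil => _ [_ [_ [_ [_ [_ [C3 _]]]]]] ell_lt_t tL.
have t'L : t - ell.+1 < L by lia.
by apply: C3; rewrite !val_insubd ?tL ?t'L //; lia.
Qed.

Lemma arrow_wrap : arrow c r (coil_pt ell) (coil_pt 0).
Proof.
case: coil => _ [_ [_ [_ [_ [_ [_ C4]]]]]]; have ell_lt_L := cyc_len_lt.
by apply: C4; rewrite val_insubd ?ell_lt_L ?(leq_ltn_trans (leq0n ell) ell_lt_L).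
Qed.

Lemma coil_arrow_line t t' : t < L -> t' < L -> arrow c r (coil_pt t) (coil_pt t') ->
  exists l, [/\ cell_on l (coil_cell t), cell_on l (coil_cell t')
              & line_prec c r l (coil_pt t) (coil_pt t')].
Proof.
move=> tL t'L /arrowE[l [on_t on_t' prec_l]]; exists l; split=> //.
  exact/(on_line_cell coil_gridded l (coil_pt_cell tL)).
exact/(on_line_cell coil_gridded l (coil_pt_cell t'L)).
Qed.

Lemma coil_arrow_prec t t' l : t < L -> t' < L -> arrow c r (coil_pt t) (coil_pt t') ->
  cell_on l (coil_cell t) -> cell_on l (coil_cell t') ->
  line_prec c r l (coil_pt t) (coil_pt t').
Proof.
move=> tL t'L.
exact: (arrow_line_prec M_gridding M_signs coil_gridded (l := l)
          (coil_pt_cell tL) (coil_pt_cell t'L)).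
Qed.

Lemma consecutive_cells_line t :
  exists l, cell_on l (coil_cell t) && cell_on l (coil_cell t.+1).
Proof.
have tm_lt : t %% ell < ell by rewrite ltn_mod cyc_len_gt0.
have tmSL : (t %% ell).+1 < L := leq_ltn_trans tm_lt cyc_len_lt.
have [l [on_t on_tS _]] := coil_arrow_line (ltnW tmSL) tmSL (arrow_succ tmSL).
have cellS : coil_cell (t %% ell).+1 = coil_cell t.+1.
  by apply/eqP; rewrite coil_cellS coil_cell_mod.
by exists l; rewrite -coil_cell_mod -cellS on_t.
Qed.

Lemma coil_cells_adjacent t t' l : cell_on l (coil_cell t) -> cell_on l (coil_cell t') ->
  coil_cell t != coil_cell t' -> coil_cell t' = coil_cell t.+1 \/ coil_cell t = coil_cell t'.+1.
Proof.
move=> on_t on_t' ne_tt'; have ell3 := cyc_len_gt2 M_cycle.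
(* [p] is t - 1 modulo ell, written so as to avoid truncated subtraction. *)
pose p := t + ell.-1.
have cell_pS : coil_cell p.+1 = coil_cell t.
  by rewrite /p -addnS prednK ?cyc_len_gt0 // coil_cellD.
have ne_tS_t : coil_cell t.+1 != coil_cell t by rewrite -addn1 coil_cellD_neq //; lia.
have ne_p_t : coil_cell p != coil_cell t by rewrite coil_cellD_neq //; lia.
have ne_p_tS : coil_cell p != coil_cell t.+1.
  by rewrite (_ : p = t.+1 + (ell - 2)) ?coil_cellD_neq //; lia.
have third u w k : cell_on k (coil_cell t) -> cell_on k (coil_cell u) ->
    coil_cell u != coil_cell t -> cell_on k (coil_cell w) -> coil_cell w != coil_cell t ->
    coil_cell w = coil_cell u.
  rewrite eq_sym => t_k u_k ne_tu w_k ne_wt.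
  have := line_cells_two M_cycle (l := k) (z := coil_cell w) _ _ _ ne_tu.
  by rewrite !mem_line_cells_coil (negbTE ne_wt) => /(_ t_k u_k w_k) /eqP.
have [l1 /andP[t_l1 tS_l1]] := consecutive_cells_line t.
have [l2 /andP[p_l2]] := consecutive_cells_line p; rewrite cell_pS => t_l2.
have [e12|ne12] := eqVneq l1 l2.
  subst l2; case/eqP: ne_p_tS; exact: third t_l1 tS_l1 ne_tS_t p_l2 ne_p_t.
rewrite eq_sym in ne_tt'.
case/orP: (cell_on_third ne12 t_l1 t_l2 on_t) => /eqP e; subst l.
  by left; apply: third t_l1 tS_l1 ne_tS_t on_t' ne_tt'.
right; rewrite -cell_pS; apply/eqP; rewrite coil_cellS.
by rewrite (third _ _ _ t_l2 p_l2 ne_p_t on_t' ne_tt').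
Qed.

Lemma coil_prec_back t l : ell <= t -> t < L -> cell_on l (coil_cell t) ->
  line_prec c r l (coil_pt t) (coil_pt (t - ell)).
Proof.
move=> ell_le_t tL t_l.
have [ell_lt_t|t_ell] : ell < t \/ ell = t by lia.
- pose u := t - ell.+1.
  have uS : u.+1 = t - ell by rewrite /u; lia.
  have uSL : u.+1 < L by rewrite /u; lia.
  have [l1 [t_l1 u_l1 prec_tu]] := coil_arrow_line tL (ltnW uSL) (arrow_back ell_lt_t tL).
  have prec_uS : line_prec c r l1 (coil_pt u) (coil_pt u.+1).
    by apply: coil_arrow_prec (arrow_succ uSL) u_l1 _; rewrite ?(ltnW uSL) // uS coil_cellB.
  have := line_prec_trans prec_tu prec_uS; rewrite uS.
  have tB_cell : in_cell (coil_pt (t - ell)) (coil_cell t).1 (coil_cell t).2.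
    by rewrite -(coil_cellB ell_le_t); apply: coil_pt_cell; lia.
  exact: (line_prec_in_cell M_gridding M_signs coil_gridded (coil_pt_cell tL) tB_cell t_l1 t_l).
- subst t; rewrite subnn.
  have L_gt0 : 0 < L by lia.
  have l_0 : cell_on l (coil_cell 0) by rewrite -coil_cell_len.
  exact: coil_arrow_prec tL L_gt0 arrow_wrap t_l l_0.
Qed.

Lemma coil_prec_same_cell t t' l : t' < t -> t < L -> coil_cell t = coil_cell t' ->
  cell_on l (coil_cell t) -> line_prec c r l (coil_pt t) (coil_pt t').
Proof.
elim/ltn_ind: t => t IH t'_lt_t tL same t_l.
have gap : t' + ell <= t.
  by apply: modn_eq_gap cyc_len_gt0 t'_lt_t _; apply/eqP; rewrite -coil_cell_eq same.
have ell_le_t : ell <= t by lia.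
have back := coil_prec_back ell_le_t tL t_l.
have [lt|ge] := ltnP t' (t - ell); last by rewrite (_ : t' = t - ell) //; lia.
have ell_gt0 := cyc_len_gt0.
by apply: line_prec_trans back (IH _ _ lt _ _ _); rewrite ?coil_cellB //; lia.
Qed.

Lemma coil_prec t t' l : t'.+1 < t -> t < L ->
  cell_on l (coil_cell t) -> cell_on l (coil_cell t') ->
  line_prec c r l (coil_pt t) (coil_pt t').
Proof.
move=> t'S_lt_t tL t_l t'_l; have ell_lt_L := cyc_len_lt; have ell_gt0 := cyc_len_gt0.
have [same|ne] := eqVneq (coil_cell t) (coil_cell t').
  by apply: coil_prec_same_cell same t_l; lia.
case: (coil_cells_adjacent t_l t'_l ne) => [next|prev].
- case: t' next t'S_lt_t t'_l {ne} => [|w] next lt t'_l.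
  + have cell_t : coil_cell t = coil_cell ell.-1.
      by apply/eqP; rewrite -coil_cellS prednK // -next coil_cell_len.
    have le : ell.-1 <= t.
      have := leq_mod t ell; move/eqP: cell_t; rewrite coil_cell_eq => /eqP->.
      by rewrite modn_small //; lia.
    have prec_last : line_prec c r l (coil_pt ell.-1) (coil_pt 0).
      have ell_l : cell_on l (coil_cell ell) by rewrite coil_cell_len.
      apply: line_prec_trans (_ : line_prec c r l _ (coil_pt ell)) _.
        have := @arrow_succ ell.-1; rewrite prednK // => /(_ ell_lt_L) arr.
        by apply: coil_arrow_prec arr _ ell_l; rewrite -?cell_t //; lia.
      by apply: coil_arrow_prec arrow_wrap ell_l t'_l; lia.
    move: le; rewrite leq_eqVlt => /predU1P[<-|lt'] //.
    by apply: line_prec_trans (coil_prec_same_cell lt' tL cell_t t_l) prec_last.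
  + have cell_w : coil_cell w = coil_cell t by apply/eqP; rewrite -coil_cellS next.
    apply: line_prec_trans (_ : line_prec c r l _ (coil_pt w)) _.
      by apply: coil_prec_same_cell; rewrite ?cell_w //; lia.
    by apply: coil_arrow_prec (arrow_succ _) _ t'_l; rewrite ?cell_w //; lia.
- have gap : t'.+1 + ell <= t.
    by apply: modn_eq_gap ell_gt0 t'S_lt_t _; apply/eqP; rewrite -coil_cell_eq prev.
  pose u := t - ell.+1.
  have cell_u : coil_cell u = coil_cell t'.
    apply/eqP; rewrite -coil_cellS -prev (_ : u.+1 = t - ell) ?coil_cellB //; lia.
  have prec_tu : line_prec c r l (coil_pt t) (coil_pt u).
    by apply: coil_arrow_prec (arrow_back _ tL) t_l _; rewrite ?cell_u //; lia.
  have [lt|ge] := ltnP t' u; last by rewrite (_ : t' = u) //; lia.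
  apply: line_prec_trans prec_tu (coil_prec_same_cell lt _ cell_u _); last by rewrite cell_u.
  lia.
Qed.

End Points.

Lemma coil_line_prec (q q' : 'I_L) l : (val q').+1 < val q ->
  on_line l (s q : gpt G) -> on_line l (s q' : gpt G) ->
  line_prec c r l (s q : gpt G) (s q').
Proof.
rewrite -(coil_ptE q q) -(coil_ptE q q') => lt.
rewrite (on_line_cell coil_gridded l (coil_pt_cell q (ltn_ord q))).
rewrite (on_line_cell coil_gridded l (coil_pt_cell q (ltn_ord q'))).
exact: coil_prec.
Qed.

End Coil.

Theorem lemma3p9 (m n : nat) (M : 'M[int]_(m, n))
    (c : 'I_m -> int) (r : 'I_n -> int)
    (L : nat) (pi : {perm 'I_L}) (a b : nat -> nat)
    (s : {perm 'I_L}) (lab : nat -> 'I_m * 'I_n) :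
  is_gridding_matrix M ->
  pmm_signs M c r ->
  rc_is_cycle M ->
  is_coil M c r pi a b s lab ->
  forall k : 'I_L, 0 < val k -> (val k).+1 < L ->
  let G := perm_gconf pi a b in
  let U := [set p : 'I_L | p != s k] in
  let Sset := [set s q | q : 'I_L & val k < val q] in
  let Tset := [set s q | q : 'I_L & val q < val k] in
  Mdivisible M c r (restrict (G := G) U) /\
  Msum c r (restrict (G := G) U) (restrict (G := G) Sset) (restrict (G := G) Tset).
Proof.
move=> M_gridding M_signs M_cycle coil k k_gt0 kS_lt_L G U Sset Tset.
have memS p : (p \in Sset) = (val k < val ((s^-1)%g p)).
  by rewrite /Sset (can_imset_pre _ (permK s)) !inE.
have memT p : (p \in Tset) = (val ((s^-1)%g p) < val k).
  by rewrite /Tset (can_imset_pre _ (permK s)) !inE.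
have defU : U = Sset :|: Tset.
  by apply/setP => p; rewrite !inE memS memT -(canF_eq (permKV s)) -val_eqE neq_ltn orbC.
have disjST : [disjoint Sset & Tset].
  by rewrite -setI_eq0; apply/set0Pn => -[p]; rewrite inE memS memT => /andP[]; lia.
have neS : Sset != set0 by apply/set0Pn; exists (s (Ordinal kS_lt_L)); rewrite memS permK.
have L_gt0 : 0 < L by lia.
have neT : Tset != set0 by apply/set0Pn; exists (s (Ordinal L_gt0)); rewrite memT permK.
have S_before_T (p q : gpt G) (l : 'I_m + 'I_n) :
    p \in Sset -> q \in Tset -> on_line l p -> on_line l q -> line_prec c r l p q.
  rewrite memS memT -[p](permKV s) -[q](permKV s) !permK => pS qT.
  exact: (coil_line_prec M_gridding M_signs M_cycle coil (leq_ltn_trans qT pS)).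
have sum := restrict_Msum (G := G) neS neT disjST defU S_before_T.
by split=> //; apply: (restrict_Mdivisible (coil_gridded coil) neS neT sum).
Qed.
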